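(* Let $K$ be a field, $\mathcal{H}$ a simple hypergraph on $\{x_1,\dots,x_n\}$ with edges $S_1,\dots,S_m$, let $i,j$ be integers, and let $\mathcal{B}_{i,j}$ be the set of basis elements $\overline{e_{\ell_1,\dots,\ell_i}}$ of $\overline{T}_i$ with $\overline{e_{\ell_1,\dots,\ell_i}}\in\mathrm{Ker}\,\overline{\partial}_i\setminus\mathrm{Im}\,\overline{\partial}_{i+1}$ and $|\bigcup_{k=1}^iS_{\ell_k}|=j$. Then (number of self semi-induced matchings in $\mathcal{H}$ of type $(i,j)$) $\le|\mathcal{B}_{i,j}|\le$ (number of self-contained semi-induced matchings in $\mathcal{H}$ of type $(i,j)$).
   Context: A simple hypergraph $\mathcal{H}$ on $\{x_1,\dots,x_n\}$ is a set $\mathcal{E}(\mathcal{H})$ of subsets (edges) of cardinality at least $2$, none contained in another. With edges ordered $S_1,\dots,S_m$, let $\overline{T}_0=K$ and for $i\ge1$ let $\overline{T}_i$ be the $K$-vector space with basis $\overline{e_{\ell_1,\dots,\ell_i}}$, $1\le\ell_1<\dots<\ell_i\le m$, graded by $\deg\overline{e_{\ell_1,\dots,\ell_i}}=|\bigcup_{t}S_{\ell_t}|$, with differential $\overline{\partial}_i(\overline{e_{\ell_1,\dots,\ell_i}})=\sum_{k:\,S_{\ell_k}\subseteq\bigcup_{t\neq k}S_{\ell_t}}(-1)^k\,\overline{e_{\ell_1,\dots,\widehat{\ell_k},\dots,\ell_i}}$ (the Taylor resolution of $R/I(\mathcal{H})$ tensored with $K$). For a family $\mathcal{S}=\{E_1,\dots,E_i\}$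 of distinct edges, its type is $(i,j)$ with $j=|\bigcup_\ell E_\ell|$. $\mathcal{S}$ is a self semi-induced matching if no edge outside $\mathcal{S}$ is contained in $\bigcup_\ell E_\ell$ and for all $k$, $E_k\nsubseteq\bigcup_{\ell\neq k}E_\ell$. It is a self-contained semi-induced matching if (i) for each edge $E\notin\mathcal{S}$, either $E\nsubseteq\bigcup_\ell E_\ell$ or there is $k$ with $E_k\subseteq E\cup\bigcup_{\ell\neq k}E_\ell$, and (ii) for all $k$, $E_k\nsubseteq\bigcup_{\ell\neq k}E_\ell$. *)

From HB Require Import structures.
From mathcomp Require Import all_boot all_order all_algebra.
From mathcomp Require Import boolp.
Set Implicit Arguments. Unset Strict Implicit. Unset Printing Implicit Defensive.
Import GRing.Theory.
Local Open Scope ring_scope.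

(* Hypergraph on vertices 'I_n with edges S_1..S_m given as S : 'I_m -> {set 'I_n}
   (edge S_(k+1) is S k; the order on edges is the order of 'I_m). *)
Definition simple_hypergraph (n m : nat) (S : 'I_m -> {set 'I_n}) : Prop :=
  (forall a, 2 <= #|S a|)%N /\ (forall a b, a != b -> ~~ (S a \subset S b)).

Definition edges_union n m (S : 'I_m -> {set 'I_n}) (F : {set 'I_m}) : {set 'I_n} :=
  \bigcup_(l in F) S l.

(* The vector space  \bigoplus_i \overline{T}_i : coordinates indexed by subsets
   L = {l_1 < ... < l_i} of edge indices; T_i = vectors supported on i-subsets. *)
Definition tvec (K : fieldType) (m : nat) := {ffun {set 'I_m} -> K}.

Definition tbasis (K : fieldType) m (L : {set 'I_m}) : tvec K m :=
  [ffun X => (X == L)%:R].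

Definition in_T (K : fieldType) m (i : nat) (v : tvec K m) : Prop :=
  forall X : {set 'I_m}, #|X| != i -> v X = 0.

(* sign (-1)^k where l = l_k is the k-th (1-based) element of L *)
Definition tsign (K : fieldType) m (L : {set 'I_m}) (l : 'I_m) : K :=
  (-1) ^+ #|[set t in L | (t <= l)%N]|.

Definition tdiff (K : fieldType) n m (S : 'I_m -> {set 'I_n}) (v : tvec K m) : tvec K m :=
  [ffun X => \sum_(L : {set 'I_m})
      \sum_(l in L | S l \subset edges_union S (L :\ l))
        (if X == L :\ l then tsign K L l * v L else 0)].

Definition in_image_diff (K : fieldType) n m (S : 'I_m -> {set 'I_n}) (i : nat)
  (w : tvec K m) : Prop :=
  exists v : tvec K m, in_T i.+1 v /\ tdiff S v = w.

Definition Bset (K : fieldType) n m (S : 'I_m -> {set 'I_n}) (i j : nat) : {set {set 'I_m}} :=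
  [set L : {set 'I_m} | [&& #|L| == i,
     tdiff S (tbasis K L) == 0,
     ~~ `[< in_image_diff S i (tbasis K L) >] &
     #|edges_union S L| == j]].

Definition of_type n m (S : 'I_m -> {set 'I_n}) (i j : nat) (F : {set 'I_m}) : bool :=
  (#|F| == i) && (#|edges_union S F| == j).

Definition self_semi_induced n m (S : 'I_m -> {set 'I_n}) (F : {set 'I_m}) : bool :=
  [forall e, (e \notin F) ==> ~~ (S e \subset edges_union S F)] &&
  [forall k in F, ~~ (S k \subset edges_union S (F :\ k))].

Definition self_contained_semi_induced n m (S : 'I_m -> {set 'I_n}) (F : {set 'I_m}) : bool :=
  [forall e, (e \notin F) ==>
     (~~ (S e \subset edges_union S F)
      || [exists k in F, S k \subset S e :|: edges_union S (F :\ k)])] &&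
  [forall k in F, ~~ (S k \subset edges_union S (F :\ k))].

From HB Require Import structures.
From mathcomp Require Import all_boot all_order all_algebra.
From mathcomp Require Import boolp.
Set Implicit Arguments. Unset Strict Implicit. Unset Printing Implicit Defensive.
Import GRing.Theory.
Local Open Scope ring_scope.

(* The differential of a basis vector e_L only involves the faces L \ l for
   the redundant edges l of L, i.e. those covered by the other edges of L.
   Hence e_L is a cycle iff L has no redundant edge, and the e_F-coordinate of
   any boundary vanishes unless some edge outside F is covered by the edges of
   F; together these put every self semi-induced matching in B_{i,j}.
   Conversely, if e is outside F, covered by F, and is the only redundant edge
   of F + e, then e_F is, up to sign, the boundary of e_{F + e}; so an element
   of B_{i,j} that is a cycle but not a boundary is a self-contained
   semi-induced matching. *)

Lemma setD1_inj (T : finType) (L : {set T}) (k l : T) :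
  k \in L -> l \in L -> L :\ k = L :\ l -> k = l.
Proof.
move=> kL lL eqLkl; apply/eqP; apply: contraFT (setD11 k L) => neq_kl.
by rewrite eqLkl !inE neq_kl.
Qed.

Lemma setU1D1 (T : finType) (F : {set T}) (e l : T) :
  l != e -> (e |: F) :\ l = e |: (F :\ l).
Proof.
move=> neq_le; apply/setP => x; rewrite !inE.
by case: (eqVneq x e) => [->|]; rewrite ?andbT ?orbF //= eq_sym neq_le.
Qed.

Section TaylorDifferential.
Variables (K : fieldType) (n m : nat) (S : 'I_m -> {set 'I_n}).
Implicit Types (F L X : {set 'I_m}) (v : tvec K m).

Lemma tsign_neq0 L l : tsign K L l != 0.
Proof. by rewrite /tsign signr_eq0. Qed.

Lemma tsign_mulss L l : tsign K L l * tsign K L l = 1.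
Proof. by rewrite -exprD -signr_odd oddD addbb. Qed.

Lemma tdiff_scale (c : K) v :
  tdiff S [ffun X => c * v X] = [ffun X => c * tdiff S v X].
Proof.
apply/ffunP => X; rewrite !ffunE mulr_sumr; apply: eq_bigr => L _.
rewrite mulr_sumr; apply: eq_bigr => l _.
by rewrite ffunE; case: ifP; rewrite ?mulr0 // mulrCA.
Qed.

Lemma tdiff_tbasisE L X :
  tdiff S (tbasis K L) X =
  \sum_(l in L | S l \subset edges_union S (L :\ l))
     (if X == L :\ l then tsign K L l else 0).
Proof.
rewrite ffunE (bigD1 L) //= [X in _ + X]big1 ?addr0.
  by apply: eq_bigr => l _; rewrite ffunE eqxx mulr1.
move=> L' /negbTE neq_L'L; apply: big1 => l _.
by rewrite ffunE neq_L'L mulr0 if_same.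
Qed.

Lemma tdiff_tbasis_eq0 L :
  (tdiff S (tbasis K L) == 0) =
  [forall l in L, ~~ (S l \subset edges_union S (L :\ l))].
Proof.
apply/eqP/forall_inP => [cycle k kL | irredundant]; last first.
  apply/ffunP => X; rewrite tdiff_tbasisE ffunE.
  apply: big1 => l /andP[lL redundant].
  by have := irredundant l lL; rewrite redundant.
apply/negP => redundant.
have := congr1 (fun w : tvec K m => w (L :\ k)) cycle.
rewrite /= tdiff_tbasisE ffunE (bigD1 k) ?kL ?redundant //= eqxx big1 ?addr0.
  by move/eqP; rewrite (negbTE (tsign_neq0 _ _)).
move=> l /andP[/andP[lL _] neq_lk]; case: eqP => // eqLkl.
by rewrite (setD1_inj lL kL (esym eqLkl)) eqxx in neq_lk.
Qed.

Lemma tdiff_coord_eq0 v F :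
  (forall e, e \notin F -> ~~ (S e \subset edges_union S F)) ->
  tdiff S v F = 0.
Proof.
move=> uncovered; rewrite ffunE; apply: big1 => L _.
apply: big1 => l /andP[lL redundant]; case: eqP => // eqF.
by have := uncovered l; rewrite eqF setD11 redundant => /(_ isT).
Qed.

Lemma tbasis_notin_image i F :
  (forall e, e \notin F -> ~~ (S e \subset edges_union S F)) ->
  ~ in_image_diff S i (tbasis K F).
Proof.
move=> uncovered [v [_ dv]].
have := congr1 (fun w : tvec K m => w F) dv.
by rewrite /= tdiff_coord_eq0 // ffunE eqxx => /eqP; rewrite eq_sym oner_eq0.
Qed.

Section AddCoveredEdge.
Variables (e : 'I_m) (F : {set 'I_m}).
Hypotheses (eF : e \notin F) (covered : S e \subset edges_union S F)
  (irredundant : forall k, k \in F ->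
     ~~ (S k \subset S e :|: edges_union S (F :\ k))).

Lemma tdiff_tbasis_setU1 :
  tdiff S (tbasis K (e |: F)) = [ffun X => tsign K (e |: F) e * tbasis K F X].
Proof.
apply/ffunP => X; rewrite tdiff_tbasisE (big_pred1 e) => [|l /=].
  by rewrite setU1K // !ffunE; case: eqP; rewrite ?mulr1 ?mulr0.
rewrite in_setU1; case: eqVneq => [->|neq_le] /=; first by rewrite setU1K.
have [lF|] //= := boolP (l \in F).
rewrite setU1D1 // /edges_union big_setU1 ?inE ?negb_and ?eF ?orbT //=.
exact/negbTE/irredundant.
Qed.

Lemma tbasis_in_image : in_image_diff S #|F| (tbasis K F).
Proof.
exists [ffun X => tsign K (e |: F) e * tbasis K (e |: F) X]; split.
  move=> X; rewrite !ffunE.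
  have [->|_ _] := eqVneq X (e |: F); last by rewrite mulr0.
  by rewrite cardsU1 eF eqxx.
rewrite tdiff_scale tdiff_tbasis_setU1; apply/ffunP => X.
by rewrite !ffunE mulrA tsign_mulss mul1r.
Qed.

End AddCoveredEdge.

End TaylorDifferential.

Theorem lemma2p4 (K : fieldType) (n m : nat) (S : 'I_m -> {set 'I_n})
  (HS : simple_hypergraph S) (i j : nat) :
  (#|[set F | of_type S i j F && self_semi_induced S F]|
     <= #|Bset K S i j|
   <= #|[set F | of_type S i j F && self_contained_semi_induced S F]|)%N.
Proof.
apply/andP; split; apply: subset_leq_card; apply/subsetP => F; rewrite !inE.
- case/andP=> /andP[/eqP <- /eqP <-] /andP[/forall_inP uncovered irredundant].
  rewrite !eqxx tdiff_tbasis_eq0 irredundant /= andbT.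
  by apply/asboolP/tbasis_notin_image => e /uncovered.
case/and4P=> /eqP <- cycle not_boundary /eqP <-.
rewrite /of_type /self_contained_semi_induced !eqxx -(tdiff_tbasis_eq0 K).
rewrite cycle /= andbT; apply/forallP => e; apply/implyP => eF.
apply/norP => -[/negbNE covered /exists_inPn irredundant].
move/negP: not_boundary; apply; apply/asboolP.
exact: (tbasis_in_image K eF covered irredundant).
Qed.
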